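(* Let $T_1^f$ and $T_2^g$ be merge trees and let $\varepsilon \ge 0$. Then $d_I(T_1^f, T_2^g) \le \varepsilon$ if and only if there exists an $\varepsilon$-good map $\alpha: |T_1| \to |T_2|$.
   Context: A merge tree $T^h$ is a finite rooted tree $T$ together with a continuous function $h: |T| \to \mathbb{R}$ on its underlying space $|T|$ (each edge viewed as a segment, so interior points of edges are points of $|T|$) such that $h$ is decreasing along every root-to-leaf path; the tree is modified by attaching to the root a ray going upward along which $h$ increases to $+\infty$ (all merge trees are taken in this modified form). For points $u,v$, write $u \succeq v$ if $u$ is an ancestor of $v$ (possibly $u=v$). For $\varepsilon \ge 0$, $u^{\varepsilon}$ denotes the unique ancestor of $u$ with $h(u^\varepsilon) - h(u) = \varepsilon$. Given merge trees $T_1^f$ and $T_2^g$, a pair of continuous maps $\alpha: |T_1| \to |T_2|$, $\beta: |T_2| \to |T_1|$ is $\varepsilon$-compatible if for all $u \in |T_1|$: $g(\alpha(u)) = f(u)+\varepsilon$ and $\beta(\alpha(u)) = u^{2\varepsilon}$; and for all $w \in |T_2|$: $f(\beta(w)) = g(w) + \varepsilon$ and $\alpha(\beta(w)) = w^{2\varepsilon}$. The interleaving distance is $d_I(T_1^f,T_2^g) = \inf\{\varepsilon : \text{there exists a pair of } \varepsilon\text{-compatible maps}\}$. A continuous map $\alpha: |T_1| \to |T_2|$ is $\varepsilon$-good if: (P1) $g(\alpha(u)) = f(u) + \varepsilon$ for all $u \in |T_1|$; (P2) whenever $\alpha(u_1) \succeq \alpha(u_2)$, we have $u_1^{2\varepsilon}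 \succeq u_2^{2\varepsilon}$; (P3) for every $w \in |T_2| \setminus \mathrm{Im}(\alpha)$, $|g(w^F) - g(w)| \le 2\varepsilon$, where $w^F$ is the lowest ancestor of $w$ lying in $\mathrm{Im}(\alpha)$. *)

From HB Require Import structures.
From mathcomp Require Import all_boot all_order all_algebra.
From mathcomp Require Import all_classical all_reals ereal.
Set Implicit Arguments. Unset Strict Implicit. Unset Printing Implicit Defensive.
Import Order.TTheory GRing.Theory Num.Theory.
Local Open Scope ring_scope.
Local Open Scope classical_set_scope.

(* A merge tree (already in the modified form, with the ray above the root). *)
Record mtree (R : realType) := MTree {
  vert : finType;
  root : vert;
  par : vert -> vert;
  par_root : par root = root;
  reach_root : forall v, exists n, iter n par v = root;
  hv : vert -> R;
  hv_par : forall v, v != root -> hv v < hv (par v) }.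

Section MergeTrees.
Variable R : realType.

(* Points of the underlying space |T| (with the ray attached): a point is a
   pair (v, y) where v is a vertex and y is a height in [h v, h (par v)) --
   the point of the edge from v up to its parent at height y -- or in
   [h root, +oo) when v is the root (the ray).  The function h on |T| is the
   second component. *)
Definition is_vpoint (T : mtree R) (p : vert T * R) : Prop :=
  hv p.1 <= p.2 /\ (p.1 != root T -> p.2 < hv (par p.1)).

Definition mpoint (T : mtree R) := {p : vert T * R | is_vpoint p}.

Definition ht (T : mtree R) (p : mpoint T) : R := (proj1_sig p).2.

Definition vanc (T : mtree R) (a v : vert T) : Prop :=
  exists n, iter n (@par R T) v = a.

Definition anc (T : mtree R) (u v : mpoint T) : Prop :=
  vanc (proj1_sig u).1 (proj1_sig v).1 /\ ht v <= ht u.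

Definition is_shift (T : mtree R) (u : mpoint T) (e : R) (a : mpoint T) : Prop :=
  anc a u /\ ht a - ht u = e.

(* The path metric of |T| (edge lengths = height differences):
   d(p,q) = inf over common ancestors a of (h a - h p) + (h a - h q).
   [dist_lt p q d] means d(p,q) < d. *)
Definition dist_lt (T : mtree R) (p q : mpoint T) (d : R) : Prop :=
  exists a, anc a p /\ anc a q /\ (ht a - ht p) + (ht a - ht q) < d.

Definition mcont (T1 T2 : mtree R) (f : mpoint T1 -> mpoint T2) : Prop :=
  forall p (e : R), 0 < e -> exists d : R, 0 < d /\
    forall q, dist_lt p q d -> dist_lt (f p) (f q) e.

Definition compatible (T1 T2 : mtree R) (e : R)
    (alpha : mpoint T1 -> mpoint T2) (beta : mpoint T2 -> mpoint T1) : Prop :=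
  [/\ mcont alpha, mcont beta,
      forall u, ht (alpha u) = ht u + e /\ is_shift u (2 * e) (beta (alpha u)) &
      forall w, ht (beta w) = ht w + e /\ is_shift w (2 * e) (alpha (beta w))].

(* interleaving distance, as an extended real (inf of the empty set is +oo) *)
Definition dI (T1 T2 : mtree R) : \bar R :=
  ereal_inf (EFin @` [set e : R | 0 <= e /\
     exists (alpha : mpoint T1 -> mpoint T2) (beta : mpoint T2 -> mpoint T1),
       compatible e alpha beta]).

Definition in_image (T1 T2 : mtree R) (alpha : mpoint T1 -> mpoint T2)
  (w : mpoint T2) : Prop := exists u, alpha u = w.

Definition lowest_anc_in (T : mtree R) (S : mpoint T -> Prop) (w a : mpoint T) :
  Prop := S a /\ anc a w /\ (forall b, S b -> anc b w -> anc b a).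

Definition good (T1 T2 : mtree R) (e : R) (alpha : mpoint T1 -> mpoint T2) :
  Prop :=
  [/\ mcont alpha,
      (* P1 *) forall u, ht (alpha u) = ht u + e,
      (* P2 *) (forall u1 u2, anc (alpha u1) (alpha u2) ->
                 forall a1 a2, is_shift u1 (2 * e) a1 -> is_shift u2 (2 * e) a2 ->
                   anc a1 a2) &
      (* P3 *) forall w, ~ in_image alpha w ->
                 forall a, lowest_anc_in (in_image alpha) w a ->
                   `|ht a - ht w| <= 2 * e].

End MergeTrees.

From Pilot Require Import Defs.
From HB Require Import structures.
From mathcomp Require Import all_boot all_order all_algebra.
From mathcomp Require Import all_classical all_reals ereal.
From mathcomp Require Import lra.
Import Order.TTheory GRing.Theory Num.Theory.
Set Implicit Arguments. Unset Strict Implicit. Unset Printing Implicit Defensive.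
Local Open Scope ring_scope.
Local Open Scope classical_set_scope.

(* A map alpha with g o alpha = f + eps is continuous iff it commutes with the
   upward shifts u |-> u^t, so both compatible pairs and good maps are
   shift-commuting maps.  A compatible pair gives P2 by applying the monotone
   beta, and P3 because w^{2eps} = alpha (beta w) lies in the image.
   Conversely, the image of a good alpha is closed along ancestor chains (T1
   has finitely many edges), so every w has a lowest ancestor w^F in it, and
   beta w := (alpha^-1 w^F)^{2eps - (h(w^F) - h(w))} is well defined by P2 and
   compatible with alpha.  Finally the infimum defining d_I is attained: for
   compatible pairs at eps + d, d -> 0, fix by pigeonhole the images of the
   vertices; these pairs are then the shifts by d of one fixed pair of maps,
   which is eps-compatible. *)

Section RealFacts.
Variable R : realType.

Lemma inf_mem (I : set R) (l x0 : R) : I x0 -> lbound I l ->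
  (forall x, l <= x -> lbound I x ->
     (forall eta, 0 < eta -> exists2 t, I t & t < x + eta) -> I x) ->
  I (inf I).
Proof.
move=> Ix0 lbl closedI; have I0 : I !=set0 by exists x0.
have lbI : has_lbound I by exists l.
apply: closedI; [exact: lb_le_inf I0 lbl|exact: ge_inf|move=> eta eta0].
exact: inf_adherent eta0 (conj I0 lbI).
Qed.

Lemma real_ind_down (a b : R) (P : R -> Prop) : a <= b -> P b ->
  (forall s, a <= s <= b ->
     exists2 r, 0 < r & forall s', s <= s' < s + r -> P s' -> P s) ->
  (forall s, a < s <= b ->
     exists2 r, 0 < r & forall s', a <= s' <= s -> s - r < s' -> P s -> P s') ->
  P a.
Proof.
move=> ab Pb up down.
pose I := [set s | a <= s <= b /\ P s].
have lbI : lbound I a by move=> s [/andP[]].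
have Iinf : I (inf I).
  apply: (inf_mem (x0 := b) _ lbI) => [|x ax lbx near_x]; first by split=> //; rewrite ab lexx.
  have [t It _] := near_x _ ltr01; have [/andP[_ tb] _] := It.
  have axb : a <= x <= b by rewrite ax (le_trans (lbx t It) tb).
  have [r r0 Pr] := up x axb; have [t' It' xt'] := near_x r r0.
  by split=> //; apply: Pr It'.2; rewrite xt' lbx.
have [/andP[ainf infb] Pinf] := Iinf.
case: (eqVneq (inf I) a) => [<-|infNa]; first exact: Pinf.
have a_lt_inf : a < inf I by rewrite lt_neqAle eq_sym infNa.
have [r r0 Pr] := down (inf I) (introT andP (conj a_lt_inf infb)).
set m := Num.min r (inf I - a).
have m0 : 0 < m by rewrite lt_min r0 subr_gt0.
have [mr ma] : m <= r /\ m <= inf I - a by rewrite !ge_min !lexx orbT.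
have Im : I (inf I - m / 2).
  split; first by apply/andP; split; lra.
  by apply: Pr Pinf; [apply/andP; split|]; lra.
have := ge_inf (ex_intro _ a lbI) Im; lra.
Qed.

Lemma pigeonhole_pos (K : finType) (Q : K -> R -> Prop) :
  (forall k eta eta', Q k eta -> eta <= eta' -> Q k eta') ->
  (forall eta, 0 < eta -> exists k, Q k eta) ->
  exists k, forall eta, 0 < eta -> Q k eta.
Proof.
move=> Qmono Qex; apply: contrapT => noK.
have noQ k : exists eta, 0 < eta /\ ~ Q k eta.
  apply: contrapT => Qk; apply: noK; exists k => eta eta0.
  by apply: contrapT => nQ; apply: Qk; exists eta.
have [g gP] := choice noQ.
pose m := \big[Num.min/1]_k g k.
have m0 : 0 < m by apply: lt_bigmin => // k _; exact: (gP k).1.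
have [k Qk] := Qex m m0.
by apply: (gP k).2; apply: Qmono Qk _; exact: bigmin_le.
Qed.

End RealFacts.

Section TreeGeometry.
Variables (R : realType) (T : mtree R).
Local Notation rootT := (@Defs.root R T).
Implicit Types (v w : vert T) (a b c p q x y : mpoint T).

Definition pvert p : vert T := (proj1_sig p).1.

Lemma pvertP p :
  hv (pvert p) <= ht p /\ (pvert p != rootT -> ht p < hv (par (pvert p))).
Proof. by case: p => [[v y] []]. Qed.

Lemma point_eq p q : pvert p = pvert q -> ht p = ht q -> p = q.
Proof.
case: p q => [[v y] Hp] [[w z] Hq]; rewrite /pvert /ht /= => vw yz.
by subst; congr exist; exact: Prop_irrelevance.
Qed.

Definition vpoint v : mpoint T :=
  exist _ (v, hv v) (conj (lexx (hv v)) (@hv_par R T v)).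

Definition mkpoint (z : vert T * R) : mpoint T :=
  if pselect (is_vpoint z) is left pz then exist _ z pz else vpoint rootT.

Lemma mkpointE (z : vert T * R) : is_vpoint z -> proj1_sig (mkpoint z) = z.
Proof. by rewrite /mkpoint; case: pselect. Qed.

Lemma iter_par_root n : iter n (@par R T) rootT = rootT.
Proof. by elim: n => //= n ->; rewrite par_root. Qed.

Lemma vanc_refl v : vanc v v. Proof. by exists 0%N. Qed.

Lemma vanc_trans w v u : vanc w v -> vanc v u -> vanc w u.
Proof. by move=> [m <-] [n <-]; exists (m + n)%N; rewrite iterD. Qed.

Lemma vanc_par v : vanc (par v) v. Proof. by exists 1%N. Qed.

Lemma hv_par_le v : hv v <= hv (par v).
Proof.
by case: (eqVneq v rootT) => [->|vNr]; [rewrite par_root|exact/ltW/hv_par].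
Qed.

Lemma hv_vanc w v : vanc w v -> hv v <= hv w.
Proof. by move=> [n <-]; elim: n => //= n IH; exact: le_trans IH (hv_par_le _). Qed.

Lemma vanc_neq w v : vanc w v -> w != v -> v != rootT /\ vanc w (par v).
Proof.
move=> [[|n] <-]; first by rewrite eqxx.
move=> wNv; split; last by exists n; rewrite -iterSr.
by apply: contraNneq wNv => ->; rewrite iter_par_root.
Qed.

Lemma vanc_total w w' v : vanc w v -> vanc w' v -> vanc w w' \/ vanc w' w.
Proof.
move=> [m <-] [n <-]; case: (leqP m n) => mn.
  by right; exists (n - m)%N; rewrite -iterD subnK.
by left; exists (m - n)%N; rewrite -iterD subnK // ltnW.
Qed.

Lemma vanc_vpoint_ex v (y : R) : hv v <= y -> exists2 w, vanc w v & is_vpoint (w, y).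
Proof.
have [n] := reach_root v; elim: n v => [|n IH] v vr vy.
  by exists v; [exact: vanc_refl|split=> //=; rewrite -vr eqxx].
case: (eqVneq v rootT) => [vr0|vNr].
  by exists v; [exact: vanc_refl|split=> //=; rewrite vr0 eqxx].
case: (ltP y (hv (par v))) => [ylt|ley]; first by exists v; [exact: vanc_refl|].
have [w wv wy] := IH (par v) (etrans (esym (iterSr _ _ _)) vr) ley.
by exists w => //; exact: vanc_trans wv (vanc_par v).
Qed.

Lemma ht_lt_hv_vanc p q :
  vanc (pvert p) (pvert q) -> pvert p != pvert q -> ht q < hv (pvert p).
Proof.
move=> pq pNq; have [qNr pparq] := vanc_neq pq pNq.
exact: lt_le_trans ((pvertP q).2 qNr) (hv_vanc pparq).
Qed.

Lemma anc_refl p : anc p p.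
Proof. by split; [exact: vanc_refl|]. Qed.

Lemma anc_trans a b c : anc a b -> anc b c -> anc a c.
Proof.
by move=> [ab hab] [bc hbc]; split; [exact: vanc_trans ab bc|exact: le_trans hbc hab].
Qed.

Lemma anc_ht a p : anc a p -> ht p <= ht a.
Proof. by case. Qed.

Lemma vanc_anc_total p q : vanc (pvert p) (pvert q) -> anc p q \/ anc q p.
Proof.
move=> pq; case: (leP (ht q) (ht p)) => hqp; first by left.
right; split; last exact: ltW.
change (vanc (pvert q) (pvert p)).
case: (eqVneq (pvert p) (pvert q)) => [->|pNq]; first exact: vanc_refl.
by have := ht_lt_hv_vanc pq pNq; have := (pvertP p).1; lra.
Qed.

Lemma anc_total a b p : anc a p -> anc b p -> anc a b \/ anc b a.
Proof.
move=> [ap _] [bp _]; case: (vanc_total ap bp); first exact: vanc_anc_total.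
by move=> /vanc_anc_total /or_comm.
Qed.

Lemma anc_eq a b : anc a b -> ht a = ht b -> a = b.
Proof.
move=> [ab _] hab; apply: point_eq => //.
case: (eqVneq (pvert a) (pvert b)) => // aNb; exfalso.
by have := ht_lt_hv_vanc ab aNb; have := (pvertP a).1; lra.
Qed.

Lemma comparable_anc a b : anc a b \/ anc b a -> ht a <= ht b -> anc b a.
Proof.
case=> // ab hab; have eq_ht : ht a = ht b by apply/eqP; rewrite eq_le hab anc_ht.
by rewrite (anc_eq ab eq_ht); exact: anc_refl.
Qed.

Lemma anc_le a b p : anc a p -> anc b p -> ht a <= ht b -> anc b a.
Proof. by move=> ap bp; apply: comparable_anc; exact: anc_total ap bp. Qed.

Lemma anc_uniq a b p : anc a p -> anc b p -> ht a = ht b -> a = b.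
Proof. by move=> ap bp hab; apply: (anc_eq (anc_le bp ap _) hab); rewrite hab. Qed.

Lemma lowest_anc_in_uniq (S : mpoint T -> Prop) x a b :
  lowest_anc_in S x a -> lowest_anc_in S x b -> a = b.
Proof.
move=> [Sa [ax a_low]] [Sb [bx b_low]]; have ab := b_low _ Sa ax.
by apply: (anc_eq ab); apply/eqP; rewrite eq_le (anc_ht ab) (anc_ht (a_low _ Sb bx)).
Qed.

Lemma shift_ex t p : 0 <= t -> exists a, is_shift p t a.
Proof.
move=> t0; have [|w wp wy] := @vanc_vpoint_ex (pvert p) (ht p + t).
  by have := (pvertP p).1; lra.
exists (exist _ (w, ht p + t) wy); split; last by rewrite /ht /=; lra.
by split=> //; rewrite /ht /=; lra.
Qed.

Definition shift t p : mpoint T :=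
  if pselect (0 <= t) is left t0 then proj1_sig (cid (shift_ex p t0)) else p.

Lemma shiftP t p : 0 <= t -> is_shift p t (shift t p).
Proof. by rewrite /shift; case: pselect => // t0 _; case: cid. Qed.

Lemma shift_anc t p : 0 <= t -> anc (shift t p) p.
Proof. by move=> /(shiftP p) []. Qed.

Lemma shift_ht t p : 0 <= t -> ht (shift t p) = ht p + t.
Proof. by move=> /(shiftP p) [_]; lra. Qed.

Lemma is_shiftE t p a : is_shift p t a -> a = shift t p.
Proof.
move=> [ap hap]; have t0 : 0 <= t by have := anc_ht ap; lra.
by apply: (anc_uniq ap (shift_anc p t0)); rewrite shift_ht //; lra.
Qed.

Lemma anc_shiftE a p : anc a p -> a = shift (ht a - ht p) p.
Proof. by move=> ap; apply: is_shiftE. Qed.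

Lemma shift0 p : shift 0 p = p.
Proof. by apply/esym/is_shiftE; split; [exact: anc_refl|lra]. Qed.

Lemma shiftD s t p : 0 <= s -> 0 <= t -> shift s (shift t p) = shift (s + t) p.
Proof.
move=> s0 t0; apply: is_shiftE; split.
  exact: anc_trans (shift_anc _ s0) (shift_anc _ t0).
by rewrite !shift_ht //; lra.
Qed.

Lemma shift_split s t p : 0 <= s <= t -> shift t p = shift (t - s) (shift s p).
Proof. by move=> /andP[s0 st]; rewrite shiftD ?subrK //; lra. Qed.

Lemma shiftC s t p : 0 <= s -> 0 <= t -> shift s (shift t p) = shift t (shift s p).
Proof. by move=> s0 t0; rewrite !shiftD // addrC. Qed.

Lemma vpoint_shiftE p : p = shift (ht p - hv (pvert p)) (vpoint (pvert p)).
Proof.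
have pv : anc p (vpoint (pvert p)) by split; [exact: vanc_refl|exact: (pvertP p).1].
exact: anc_shiftE pv.
Qed.

Lemma dist_lt_sym p q d : dist_lt p q d -> dist_lt q p d.
Proof. by move=> [c [cp [cq H]]]; exists c; split=> //; split=> //; lra. Qed.

Lemma dist_lt_le p q d d' : dist_lt p q d -> d <= d' -> dist_lt p q d'.
Proof. by move=> [c [cp [cq H]]] dd'; exists c; split=> //; split=> //; lra. Qed.

Lemma dist_lt_anc a p d : anc a p -> ht a - ht p < d -> dist_lt a p d.
Proof. by move=> ap H; exists a; split; [exact: anc_refl|split=> //; lra]. Qed.

Lemma dist_lt_unshift t p q d : 0 <= t ->
  dist_lt (shift t p) (shift t q) d -> dist_lt p q (d + 2 * t).
Proof.
move=> t0 [c [cp [cq H]]]; exists c.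
split; first exact: anc_trans cp (shift_anc _ t0).
split; first exact: anc_trans cq (shift_anc _ t0).
by move: H; rewrite !shift_ht //; lra.
Qed.

(* On the ray there is no vertex above p, and any positive radius would do. *)
Definition star_radius p : R :=
  if pvert p == rootT then 1 else hv (par (pvert p)) - ht p.

Lemma star_radius_gt0 p : 0 < star_radius p.
Proof.
by rewrite /star_radius; case: eqP => // /eqP pNr; have := (pvertP p).2 pNr; lra.
Qed.

Lemma anc_near_pvert c p : anc c p -> ht c - ht p < star_radius p -> pvert c = pvert p.
Proof.
move=> [cp _] hc; case: (eqVneq (pvert c) (pvert p)) => // cNp; exfalso.
have [pNr cparp] := vanc_neq cp cNp; move: hc; rewrite /star_radius (negPf pNr).
by have := hv_vanc cparp; have := (pvertP c).1; rewrite /pvert; lra.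
Qed.

Lemma dist_lt_star p q : dist_lt p q (star_radius p) -> anc p q \/ anc q p.
Proof.
move=> [c [cp [cq H]]]; have cpv : pvert c = pvert p.
  by apply: (anc_near_pvert cp); have := anc_ht cq; lra.
by apply: vanc_anc_total; rewrite -cpv; exact: cq.1.
Qed.

Lemma shift_near_pvert t p : 0 <= t -> t < star_radius p -> pvert (shift t p) = pvert p.
Proof.
by move=> t0 tr; apply: anc_near_pvert; [exact: shift_anc|rewrite shift_ht //; lra].
Qed.

Lemma shift_near_inj p q : ht p = ht q ->
  (forall eta, 0 < eta -> exists2 d, 0 <= d < eta & shift d p = shift d q) -> p = q.
Proof.
move=> hpq near_eq; have m0 : 0 < Num.min (star_radius p) (star_radius q).
  by rewrite lt_min !star_radius_gt0.
have [d /andP[d0]] := near_eq _ m0; rewrite lt_min => /andP[dp dq] Epq.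
by apply: point_eq => //; rewrite -(shift_near_pvert d0 dp) -(shift_near_pvert d0 dq) Epq.
Qed.

Lemma high_pointE p q : hv rootT <= ht p -> ht p = ht q -> p = q.
Proof.
have pvert_high x : hv rootT <= ht x -> pvert x = rootT.
  move=> hx; case: (eqVneq (pvert x) rootT) => // xNr; exfalso.
  by have := (pvertP x).2 xNr; have := hv_vanc (reach_root (par (pvert x))); lra.
by move=> hp hpq; apply: point_eq => //; rewrite !pvert_high //; lra.
Qed.

End TreeGeometry.

Definition shift_morph (R : realType) (T1 T2 : mtree R) (f : mpoint T1 -> mpoint T2) :=
  forall t, 0 <= t -> {morph f : p / shift t p}.

Section HeightShiftingMaps.
Variables (R : realType) (T1 T2 : mtree R) (k : R) (f : mpoint T1 -> mpoint T2).
Hypothesis f_ht : forall p, ht (f p) = ht p + k.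

Lemma shift_morph_anc : shift_morph f -> {homo f : a b / anc a b}.
Proof.
move=> fsh a b ab; have t0 : 0 <= ht a - ht b by have := anc_ht ab; lra.
by rewrite (anc_shiftE ab) fsh //; exact: shift_anc.
Qed.

Lemma shift_morph_cont : shift_morph f -> mcont f.
Proof.
move=> fsh p e e0; exists e; split=> // q [c [cp [cq H]]].
exists (f c); do 2 (split; first exact: shift_morph_anc).
by rewrite !f_ht; lra.
Qed.

Lemma cont_anc_up : mcont f -> forall x,
  exists2 r, 0 < r & forall s, 0 <= s < r -> anc (f (shift s x)) (f x).
Proof.
move=> fc x; have [r [r0 fr]] := fc x _ (star_radius_gt0 (f x)).
exists r => // s /andP[s0 sr].
have near_x : dist_lt x (shift s x) r.
  by apply/dist_lt_sym/dist_lt_anc; [exact: shift_anc|rewrite shift_ht //; lra].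
apply: comparable_anc; first exact: dist_lt_star (fr _ near_x).
by rewrite !f_ht shift_ht //; lra.
Qed.

Lemma cont_anc_down : mcont f -> forall x,
  exists2 r, 0 < r & forall q, anc x q -> ht x - ht q < r -> anc (f x) (f q).
Proof.
move=> fc x; have [r [r0 fr]] := fc x _ (star_radius_gt0 (f x)).
exists r => // q xq xqr.
have /or_comm fxq := dist_lt_star (fr _ (dist_lt_anc xq xqr)).
by apply: comparable_anc fxq _; rewrite !f_ht; have := anc_ht xq; lra.
Qed.

(* Real induction downwards along the segment from u^t to u: the set of s for
   which f(u^t) is above f(u^s) is closed and open in [0, t]. *)
Lemma cont_shift_morph : mcont f -> shift_morph f.
Proof.
move=> fc t t0 u; apply: is_shiftE; split; last by rewrite !f_ht shift_ht //; lra.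
pose P s := anc (f (shift t u)) (f (shift s u)).
suff : P 0 by rewrite /P shift0.
apply: (real_ind_down t0) => [|s st|s st].
- exact: anc_refl.
- have [r r0 fr] := cont_anc_up fc (shift s u); exists r => // s' /andP[ss' s'r] Ps'.
  apply: anc_trans Ps' _; rewrite (@shift_split _ _ s s' u); last by rewrite ss' andbT; lra.
  by apply: fr; lra.
- have [r r0 fr] := cont_anc_down fc (shift s u); exists r => // s' s's s'r Ps.
  apply: anc_trans Ps (fr _ _ _); last by rewrite !shift_ht //; lra.
  by rewrite (@shift_split _ _ s' s u) //; apply: shift_anc; lra.
Qed.

End HeightShiftingMaps.

Section CompatiblePairs.
Variables (R : realType) (T1 T2 : mtree R).
Implicit Types (e : R) (alpha : mpoint T1 -> mpoint T2) (beta : mpoint T2 -> mpoint T1).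

Lemma compatible_ht e alpha beta : compatible e alpha beta ->
  (forall u, ht (alpha u) = ht u + e) /\ (forall w, ht (beta w) = ht w + e).
Proof. by case=> _ _ Ha Hb; split=> x; [case: (Ha x)|case: (Hb x)]. Qed.

Lemma compatible_sym e (alpha : mpoint T1 -> mpoint T2) beta :
  compatible e alpha beta -> compatible e beta alpha.
Proof. by case. Qed.

Lemma compatibleP e alpha beta : 0 <= e ->
  (forall u, ht (alpha u) = ht u + e) -> (forall w, ht (beta w) = ht w + e) ->
  compatible e alpha beta <->
  [/\ shift_morph alpha, shift_morph beta,
      forall u, beta (alpha u) = shift (2 * e) u &
      forall w, alpha (beta w) = shift (2 * e) w].
Proof.
move=> e0 a_ht b_ht; have e2 : 0 <= 2 * e by lra.
split=> [[ac bc Ha Hb]|[ash bsh ba ab]].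
  split; [exact: cont_shift_morph a_ht ac|exact: cont_shift_morph b_ht bc|..].
    by move=> u; apply: is_shiftE; case: (Ha u).
  by move=> w; apply: is_shiftE; case: (Hb w).
split; [exact: shift_morph_cont a_ht ash|exact: shift_morph_cont b_ht bsh|..].
  by move=> u; rewrite ba; split=> //; exact: shiftP.
by move=> w; rewrite ab; split=> //; exact: shiftP.
Qed.

Lemma compatible_good e alpha beta : 0 <= e -> compatible e alpha beta -> good e alpha.
Proof.
move=> e0 C; have e2 : 0 <= 2 * e by lra.
have [a_ht b_ht] := compatible_ht C.
have [_ bsh ba ab] := (compatibleP e0 a_ht b_ht).1 C.
split=> //; first by case: C.
  move=> u1 u2 A a1 a2 /is_shiftE -> /is_shiftE ->; rewrite -!ba.
  exact: shift_morph_anc bsh _ _ A.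
move=> w _ a [_ [aw a_lowest]].
have : anc (shift (2 * e) w) a.
  by apply: a_lowest; [exists (beta w)|exact: shift_anc].
move/anc_ht; rewrite shift_ht // => a_le; have w_le := anc_ht aw.
by rewrite ger0_norm; lra.
Qed.

Lemma compatible_shift e e' alpha beta : 0 <= e <= e' -> compatible e alpha beta ->
  compatible e' (shift (e' - e) \o alpha) (shift (e' - e) \o beta).
Proof.
move=> /andP[e0 ee'] C; have d0 : 0 <= e' - e by lra.
have [a_ht b_ht] := compatible_ht C.
have [ash bsh ba ab] := (compatibleP e0 a_ht b_ht).1 C.
apply/compatibleP => [|u|w|]; first lra.
- by rewrite /= shift_ht // a_ht; lra.
- by rewrite /= shift_ht // b_ht; lra.
split.
- by move=> t t0 u /=; rewrite ash // shiftC.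
- by move=> t t0 w /=; rewrite bsh // shiftC.
- by move=> u /=; rewrite bsh // ba !shiftD //; [congr shift|..]; lra.
- by move=> w /=; rewrite ash // ab !shiftD //; [congr shift|..]; lra.
Qed.

End CompatiblePairs.

Section GoodMaps.
Variables (R : realType) (T1 T2 : mtree R) (e : R) (alpha : mpoint T1 -> mpoint T2).
Hypotheses (e0 : 0 <= e) (alpha_good : good e alpha).
Local Notation Im := (in_image alpha).
Local Notation root1 := (@Defs.root R T1).
Local Notation root2 := (@Defs.root R T2).

Let e2 : 0 <= 2 * e. Proof. by rewrite mulr_ge0. Qed.

Let alpha_ht u : ht (alpha u) = ht u + e. Proof. by case: alpha_good. Qed.

Let alpha_sh : shift_morph alpha.
Proof. by case: alpha_good => ac _ _ _; exact: cont_shift_morph alpha_ht ac. Qed.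

Lemma image_shift_ex w : exists2 t, 0 <= t & Im (shift t w).
Proof.
pose t := `|hv root2 - ht w| + `|hv root1 + e - ht w|.
have [t0 t_high2 t_high1] : [/\ 0 <= t, hv root2 <= ht w + t & hv root1 + e <= ht w + t].
  have n1 := ler_norm (hv root2 - ht w); have n2 := ler_norm (hv root1 + e - ht w).
  have n3 := normr_ge0 (hv root2 - ht w); have n4 := normr_ge0 (hv root1 + e - ht w).
  by rewrite /t; split; lra.
have h0 : 0 <= ht w + t - e - hv root1 by lra.
exists t => //; exists (shift (ht w + t - e - hv root1) (vpoint root1)).
by apply: high_pointE; rewrite alpha_ht !shift_ht // /ht /= -/(ht w); lra.
Qed.

(* Finitely many vertices of T1 carry the preimages of the points w^t, t -> x+;
   one of them carries preimages for arbitrarily small t - x, and the point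
   of its edge at height h(w) + x - e is then a preimage of w^x. *)
Lemma image_closed w x : 0 <= x ->
  (forall eta, 0 < eta -> exists2 t, Im (shift t w) & x <= t < x + eta) ->
  Im (shift x w).
Proof.
move=> x0 near_x.
pose Q v eta := exists t u, [/\ x <= t < x + eta, alpha u = shift t w & pvert u = v].
have [v Qv] : exists v, forall eta, 0 < eta -> Q v eta.
  apply: pigeonhole_pos => [v eta eta' [t [u [/andP[xt tlt] Eu pu]]] ee'|eta eta0].
    by exists t, u; split=> //; apply/andP; split; lra.
  by have [t [u Eu] xt] := near_x _ eta0; exists (pvert u), t, u.
have ht_pre t u : x <= t -> alpha u = shift t w -> ht u = ht w + t - e.
  by move=> xt Eu; have := alpha_ht u; rewrite Eu shift_ht; lra.
have v_low : hv v <= ht w + x - e.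
  rewrite leNgt; apply/negP => gap; have gap0 : 0 < hv v - (ht w + x - e) by lra.
  have [t [u [/andP[xt tlt] Eu pu]]] := Qv _ gap0.
  by have := ht_pre t u xt Eu; have := (pvertP u).1; rewrite pu; lra.
have c0 : 0 <= ht w + x - e - hv v by lra.
exists (shift (ht w + x - e - hv v) (vpoint v)).
apply: shift_near_inj => [|eta eta0]; first by rewrite alpha_ht !shift_ht // /ht /=; lra.
have [t [u [/andP[xt tlt] Eu pu]]] := Qv _ eta0.
exists (t - x); first by apply/andP; split; lra.
rewrite -alpha_sh ?subr_ge0 // [RHS]shiftD ?subr_ge0 // subrK -Eu; congr alpha.
rewrite [RHS]vpoint_shiftE pu shiftD ?subr_ge0 //; congr shift.
by rewrite (ht_pre t u xt Eu); lra.
Qed.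

Lemma lowest_image_anc_ex w : exists a, lowest_anc_in Im w a.
Proof.
pose I := [set t | 0 <= t /\ Im (shift t w)].
have lbI : lbound I 0 by move=> t [].
have [t1 t10 It1] := image_shift_ex w.
have [J0 IJ] : I (inf I).
  apply: (inf_mem (x0 := t1) _ lbI) => // x x0 lbx near_x; split=> //.
  apply: image_closed => // eta eta0; have [t It tlt] := near_x _ eta0.
  by exists t; [exact: It.2|rewrite lbx].
exists (shift (inf I) w); split=> //; split; first exact: shift_anc.
move=> b Ib bw; apply: (anc_le (shift_anc w J0) bw).
have : I (ht b - ht w) by split; [have := anc_ht bw; lra|rewrite -anc_shiftE].
by move/(ge_inf (ex_intro _ 0 lbI)); rewrite shift_ht //; lra.
Qed.

Definition lowest_image_anc w : mpoint T2 := proj1_sig (cid (lowest_image_anc_ex w)).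

Lemma lowest_image_ancP w : lowest_anc_in Im w (lowest_image_anc w).
Proof. by rewrite /lowest_image_anc; case: cid. Qed.

Lemma lowest_image_anc_id w : Im w -> lowest_image_anc w = w.
Proof.
move=> Iw; apply: lowest_anc_in_uniq (lowest_image_ancP w) _.
by split=> //; split; [exact: anc_refl|].
Qed.

Lemma lowest_image_anc_gap w : 0 <= ht (lowest_image_anc w) - ht w <= 2 * e.
Proof.
have [_ [Fw _]] := lowest_image_ancP w; have := anc_ht Fw.
case: (pselect (Im w)) => [/lowest_image_anc_id ->|Nw]; first by have := e2; lra.
by case: alpha_good => _ _ _ /(_ w Nw _ (lowest_image_ancP w)); rewrite ler_norml; lra.
Qed.

Definition preimage w : mpoint T1 :=
  if pselect (Im w) is left Iw then proj1_sig (cid Iw) else vpoint root1.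

Lemma preimageP w : Im w -> alpha (preimage w) = w.
Proof. by rewrite /preimage; case: pselect => // Iw _; case: cid. Qed.

Lemma preimage_lowestP w : alpha (preimage (lowest_image_anc w)) = lowest_image_anc w.
Proof. exact/preimageP/(lowest_image_ancP w).1. Qed.

(* P2 makes u^{2e} depend only on alpha u. *)
Lemma good_shift_eq u1 u2 : alpha u1 = alpha u2 -> shift (2 * e) u1 = shift (2 * e) u2.
Proof.
move=> E; have [_ _ P2 _] := alpha_good.
apply: (@anc_eq _ _ _ _ (P2 u1 u2 _ _ _ (shiftP u1 e2) (shiftP u2 e2))).
  by rewrite E; exact: anc_refl.
by rewrite !shift_ht //; have := alpha_ht u1; rewrite E alpha_ht; lra.
Qed.

(* The preimage of w^F pushed up by 2e - (h(w^F) - h(w)), which is nonnegative by P3. *)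
Definition good_inverse w : mpoint T1 :=
  shift (ht w + 2 * e - ht (lowest_image_anc w)) (preimage (lowest_image_anc w)).

Lemma good_inverse_ht w : ht (good_inverse w) = ht w + e.
Proof.
have := lowest_image_anc_gap w; have := alpha_ht (preimage (lowest_image_anc w)).
by rewrite preimage_lowestP /good_inverse => hp gap; rewrite shift_ht hp; lra.
Qed.

Lemma good_inverse_image u : good_inverse (alpha u) = shift (2 * e) u.
Proof.
have Iu : Im (alpha u) by exists u.
rewrite /good_inverse lowest_image_anc_id // addrAC subrr add0r.
by apply: good_shift_eq; rewrite preimageP.
Qed.

Lemma image_good_inverse w : alpha (good_inverse w) = shift (2 * e) w.
Proof.
have [_ [Fw _]] := lowest_image_ancP w; have /andP[_ gap] := lowest_image_anc_gap w.
have d0 : 0 <= ht w + 2 * e - ht (lowest_image_anc w) by lra.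
rewrite /good_inverse alpha_sh // preimage_lowestP; apply: is_shiftE; split.
  exact: anc_trans (shift_anc _ d0) Fw.
by rewrite shift_ht //; lra.
Qed.

Lemma lowest_image_anc_shift s w : 0 <= s -> ht w + s <= ht (lowest_image_anc w) ->
  lowest_image_anc (shift s w) = lowest_image_anc w.
Proof.
move=> s0 below; have [IF [Fw F_low]] := lowest_image_ancP w.
apply: lowest_anc_in_uniq (lowest_image_ancP _) _; split=> //.
split; first by apply: (anc_le (shift_anc w s0) Fw); rewrite shift_ht.
by move=> b Ib bw; apply: F_low Ib (anc_trans bw (shift_anc w s0)).
Qed.

Lemma image_shift_above s w (F := lowest_image_anc w) : ht F <= ht w + s ->
  shift s w = alpha (shift (ht w + s - ht F) (preimage F)).
Proof.
move=> above; have [_ [Fw _]] := lowest_image_ancP w.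
have c0 : 0 <= ht w + s - ht (lowest_image_anc w) by lra.
rewrite alpha_sh // preimage_lowestP; apply/esym/is_shiftE; split.
  exact: anc_trans (shift_anc _ c0) Fw.
by rewrite shift_ht //; lra.
Qed.

Lemma good_inverse_shift_morph : shift_morph good_inverse.
Proof.
move=> s s0 w; have /andP[gap0 gap] := lowest_image_anc_gap w.
case: (leP (ht w + s) (ht (lowest_image_anc w))) => [below|/ltW above].
  by rewrite /good_inverse lowest_image_anc_shift // shiftD ?shift_ht //; [congr shift|]; lra.
rewrite (image_shift_above above) good_inverse_image /good_inverse.
by rewrite !shiftD //; [congr shift|..]; lra.
Qed.

Lemma good_compatible : compatible e alpha good_inverse.
Proof.
apply/compatibleP => //; [exact: good_inverse_ht|split=> //].
- exact: good_inverse_shift_morph.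
- exact: good_inverse_image.
- exact: image_good_inverse.
Qed.

End GoodMaps.

Definition vert_image (R : realType) (T1 T2 : mtree R) (f : mpoint T1 -> mpoint T2)
  (v : vert T1) : vert T2 := pvert (f (vpoint v)).

Section LimitMap.
Variables (R : realType) (T1 T2 : mtree R) (eps : R) (c : vert T1 -> vert T2).

Definition approximant (f : mpoint T1 -> mpoint T2) (d : R) :=
  [/\ 0 < d, mcont f, forall u, ht (f u) = ht u + (eps + d) & vert_image f =1 c].

Hypothesis approximant_ex :
  forall eta, 0 < eta -> exists d f, d < eta /\ approximant f d.

Lemma limit_vpoint v : is_vpoint (c v, hv v + eps).
Proof.
have vpoint_ht f d : approximant f d -> ht (f (vpoint v)) = hv v + (eps + d).
  by case=> _ _ f_ht _; rewrite f_ht.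
split=> /=.
  rewrite leNgt; apply/negP => gap; have gap0 : 0 < hv (c v) - (hv v + eps) by lra.
  have [d [f [dgap fd]]] := approximant_ex gap0; have [d0 _ _ fc] := fd.
  by have := (pvertP (f (vpoint v))).1; rewrite -/(vert_image f v) fc (vpoint_ht f d fd); lra.
move=> cvNr; have [d [f [_ fd]]] := approximant_ex ltr01; have [d0 _ _ fc] := fd.
have := (pvertP (f (vpoint v))).2; rewrite -/(vert_image f v) fc (vpoint_ht f d fd).
by move=> /(_ cvNr); lra.
Qed.

Definition limit_anchor v : mpoint T2 := mkpoint (c v, hv v + eps).

Definition limit_map u : mpoint T2 :=
  shift (ht u - hv (pvert u)) (limit_anchor (pvert u)).

Lemma limit_anchor_ht v : ht (limit_anchor v) = hv v + eps.
Proof. by rewrite /ht mkpointE //; exact: limit_vpoint. Qed.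

Lemma limit_anchor_vert v : pvert (limit_anchor v) = c v.
Proof. by rewrite /pvert mkpointE //; exact: limit_vpoint. Qed.

Lemma limit_map_ht u : ht (limit_map u) = ht u + eps.
Proof. by have u_up := (pvertP u).1; rewrite shift_ht ?limit_anchor_ht; lra. Qed.

Lemma approximantE f d : approximant f d -> forall u, f u = shift d (limit_map u).
Proof.
case=> d0 fc f_ht f_vert u; have fsh := cont_shift_morph f_ht fc.
have u_up : 0 <= ht u - hv (pvert u) by have := (pvertP u).1; lra.
rewrite {1}(vpoint_shiftE u) fsh // /limit_map shiftC; [congr shift|lra|done].
apply: is_shiftE; split; last by rewrite f_ht limit_anchor_ht /ht /=; lra.
split; last by rewrite f_ht limit_anchor_ht /ht /=; lra.
change (vanc (vert_image f (pvert u)) (pvert (limit_anchor (pvert u)))).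
by rewrite f_vert limit_anchor_vert; exact: vanc_refl.
Qed.

(* limit_map is the uniform limit of the continuous approximants. *)
Lemma limit_map_cont : mcont limit_map.
Proof.
move=> p r r0; have r4 : 0 < r / 4 by rewrite divr_gt0.
have [d [f [dr fd]]] := approximant_ex r4; have [d0 fc _ _] := fd.
have r2 : 0 < r / 2 by rewrite divr_gt0.
have [s [s0 fs]] := fc p _ r2; exists s; split=> // q pq.
have := fs _ pq; rewrite !(approximantE fd) => /(dist_lt_unshift (ltW d0)).
by move/dist_lt_le; apply; lra.
Qed.

Lemma limit_map_shift_morph : shift_morph limit_map.
Proof. exact: cont_shift_morph limit_map_ht limit_map_cont. Qed.

End LimitMap.

Definition approx_pairs (R : realType) (T1 T2 : mtree R) (eps : R)
    (c1 : vert T1 -> vert T2) (c2 : vert T2 -> vert T1) :=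
  forall eta, 0 < eta -> exists d alpha beta,
    [/\ 0 < d < eta, compatible (eps + d) alpha beta,
        vert_image alpha =1 c1 & vert_image beta =1 c2].

Section ApproxPairs.
Variables (R : realType) (T1 T2 : mtree R) (eps : R).
Variables (c1 : vert T1 -> vert T2) (c2 : vert T2 -> vert T1).

Lemma approx_pairs_sym : approx_pairs eps c1 c2 -> approx_pairs eps c2 c1.
Proof.
move=> c12 eta eta0; have [d [alpha [beta [d_eta C ac bc]]]] := c12 _ eta0.
by exists d, beta, alpha; split=> //; exact: compatible_sym.
Qed.

Lemma compatible_approximant d alpha beta : 0 < d ->
  compatible (eps + d) alpha beta -> vert_image alpha =1 c1 -> approximant eps c1 alpha d.
Proof. by move=> d0 C ac; split=> //; [case: C|case: (compatible_ht C)]. Qed.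

Lemma approx_pairs_approximant : approx_pairs eps c1 c2 ->
  forall eta, 0 < eta -> exists d f, d < eta /\ approximant eps c1 f d.
Proof.
move=> c12 eta eta0; have [d [alpha [beta [/andP[d0 d_eta] C ac _]]]] := c12 _ eta0.
by exists d, alpha; split=> //; exact: compatible_approximant C ac.
Qed.

End ApproxPairs.

Section LimitPairs.
Variables (R : realType) (T1 T2 : mtree R) (eps : R).

(* Along the approximating pairs, beta (alpha u) = u^{2(eps + d)} is the shift
   by 2d of the composite of the limit maps. *)
Lemma limit_map_comp (c1 : vert T1 -> vert T2) (c2 : vert T2 -> vert T1) :
  0 <= eps -> approx_pairs eps c1 c2 ->
  forall u, limit_map eps c2 (limit_map eps c1 u) = shift (2 * eps) u.
Proof.
move=> eps0 c12 u; have A1 := approx_pairs_approximant c12.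
have A2 := approx_pairs_approximant (approx_pairs_sym c12).
have c1_ht := limit_map_ht A1; have c2_ht := limit_map_ht A2.
have c2_sh := limit_map_shift_morph A2.
apply: shift_near_inj => [|eta eta0].
  by rewrite c2_ht c1_ht shift_ht; lra.
have eta2 : 0 < eta / 2 by rewrite divr_gt0.
have [d [alpha [beta [/andP[d0 d_eta] C ac bc]]]] := c12 _ eta2.
have fa := compatible_approximant d0 C ac.
have fb := compatible_approximant d0 (compatible_sym C) bc.
have [_ _ /(_ u) [_ /is_shiftE E] _] := C.
rewrite (approximantE A2 fb) (approximantE A1 fa) c2_sh in E; last lra.
exists (2 * d); first by apply/andP; split; lra.
have -> : 2 * d = d + d by lra.
by rewrite -[LHS]shiftD ?E ?shiftD; [congr shift|..]; lra.
Qed.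

End LimitPairs.

Section Closure.
Variables (R : realType) (T1 T2 : mtree R) (eps : R).

Lemma approx_pairs_compatible (c1 : vert T1 -> vert T2) (c2 : vert T2 -> vert T1) :
  0 <= eps -> approx_pairs eps c1 c2 ->
  compatible eps (limit_map eps c1) (limit_map eps c2).
Proof.
move=> eps0 c12; have c21 := approx_pairs_sym c12.
have A1 := approx_pairs_approximant c12; have A2 := approx_pairs_approximant c21.
apply/(compatibleP eps0 (limit_map_ht A1) (limit_map_ht A2)); split.
- exact: limit_map_shift_morph.
- exact: limit_map_shift_morph.
- exact: limit_map_comp eps0 c12.
- exact: limit_map_comp eps0 c21.
Qed.

(* Pigeonhole over the finitely many pairs of vertex maps. *)
Lemma approx_pairs_ex :
  (forall d, 0 < d -> exists alpha beta, @compatible R T1 T2 (eps + d) alpha beta) ->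
  exists (c1 : vert T1 -> vert T2) (c2 : vert T2 -> vert T1), approx_pairs eps c1 c2.
Proof.
move=> near_eps.
pose K := ({ffun vert T1 -> vert T2} * {ffun vert T2 -> vert T1})%type.
have [k k_approx] : exists k : K, approx_pairs eps k.1 k.2.
  apply: pigeonhole_pos => [k eta eta' [d [alpha [beta [/andP[d0 d_eta] ]]]] ee'|eta eta0].
    by exists d, alpha, beta; split=> //; apply/andP; split; lra.
  have eta2 : 0 < eta / 2 by rewrite divr_gt0.
  have [alpha [beta C]] := near_eps _ eta2.
  exists ([ffun v => vert_image alpha v], [ffun v => vert_image beta v]).
  exists (eta / 2), alpha, beta; split=> //; first by apply/andP; split; lra.
    by move=> v; rewrite ffunE.
  by move=> v; rewrite ffunE.
by exists k.1, k.2.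
Qed.

End Closure.

Section InterleavingDistance.
Variables (R : realType) (T1 T2 : mtree R).

Lemma dI_le_compatible e (alpha : mpoint T1 -> mpoint T2) beta :
  0 <= e -> compatible e alpha beta -> (dI T1 T2 <= e%:E)%E.
Proof.
move=> e0 C; apply: ge_ereal_inf; exists e%:E => //.
by exists e => //; split=> //; exists alpha, beta.
Qed.

Lemma dI_le_compatible_near eps : (dI T1 T2 <= eps%:E)%E ->
  forall d, 0 < d -> exists alpha beta, @compatible R T1 T2 (eps + d) alpha beta.
Proof.
move=> dI_le d d0; have : (dI T1 T2 < (eps + d)%:E)%E.
  by apply: le_lt_trans dI_le _; rewrite lte_fin; lra.
move=> /ereal_inf_lt [_ [e [e0 [alpha [beta C]]] <-]]; rewrite lte_fin => e_lt.
exists (shift (eps + d - e) \o alpha), (shift (eps + d - e) \o beta).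
by apply: compatible_shift C; rewrite e0 ltW.
Qed.

End InterleavingDistance.

Theorem theorem1 (R : realType) (T1 T2 : mtree R) (eps : R) (heps : 0 <= eps) :
  (dI T1 T2 <= eps%:E)%E <->
  exists alpha : mpoint T1 -> mpoint T2, good eps alpha.
Proof.
split=> [/dI_le_compatible_near near_eps|[alpha alpha_good]].
  have [c1 [c2 c12]] := approx_pairs_ex near_eps.
  by exists (limit_map eps c1); exact: compatible_good heps (approx_pairs_compatible heps c12).
exact: dI_le_compatible heps (good_compatible heps alpha_good).
Qed.
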